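(* Let $\mathfrak V$ be a vessel on $\Omega\subseteq\mathbb R$ with transfer function $S(\lambda,x)=I-C(x)\mathbb X^{-1}(x)(\lambda I-A)^{-1}B(x)\sigma_1$. Fix $\lambda$ not in the spectrum of $A$, and let $u(\lambda,x)\in\mathbb C^2$ be a differentiable solution (in $x$) of $\lambda\sigma_2u-\sigma_1\partial_xu+\gamma u=0$. Then $y(\lambda,x)=S(\lambda,x)u(\lambda,x)$ satisfies $\lambda\sigma_2y-\sigma_1\partial_xy+\gamma_*(x)y=0$ for $x\in\Omega$.
   Context: A Krein space $\mathcal K$ is a Hilbert space with an extra continuous Hermitian (possibly indefinite) sesquilinear form; adjoints are taken with respect to it. Fix $2\times2$ matrices $\sigma_1$ (invertible, $\sigma_1=\sigma_1^*$), $\sigma_2=\sigma_2^*$, $\gamma=-\gamma^*$. A node $(C,A_\zeta,\mathbb X,A,B;\sigma_1)$: bounded $C:\mathcal K\to\mathbb C^2$, $\mathbb X:\mathcal K\to\mathcal K$, $B:\mathbb C^2\to\mathcal K$, and generators $A,A_\zeta$ of strongly continuous groups with common dense domain $D(A)=D(A_\zeta)$, such that $\mathbb X(D(A))\subseteq D(A)$ and $A\mathbb Xu+\mathbb XA_\zeta u+B\sigma_1Cu=0$ for $u\in D(A)$; invertible if $\mathbb X$ is boundedly invertible and $\mathbb X^{-1}(D(A))\subseteq D(A)$. A prevessel consists of fixed $A,A_\zeta$ and bounded operators $C(x),\mathbb X(x),B(x)$, differentiable in $x\in\mathbb R$, such that for each $x$ the tuple is a node, $B(x)\sigma_2e\in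 D(A)$ for all $e\in\mathbb C^2$, and $\partial_xB=-(AB\sigma_2+B\gamma)\sigma_1^{-1}$, $\partial_xCu=\sigma_1^{-1}(-\sigma_2CA_\zeta u+\gamma Cu)$ ($u\in D(A)$), $\partial_x\mathbb X=B\sigma_2C$. A vessel on $\Omega\subseteq\mathbb R$ is a prevessel such that for each $x\in\Omega$, $\mathbb X(x)$ is invertible and the node at $x$ is invertible, together with $\gamma_*(x)=\gamma+\sigma_2C\mathbb X^{-1}B\sigma_1-\sigma_1C\mathbb X^{-1}B\sigma_2$ on $\Omega$ (linkage condition). *)

From HB Require Import structures.
From mathcomp Require Import all_boot all_order all_algebra.
From mathcomp Require Import all_classical all_reals all_analysis.
From mathcomp Require Import complex.
Import Order.TTheory GRing.Theory Num.Theory.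
Import numFieldTopology.Exports numFieldNormedType.Exports.

Set Implicit Arguments.
Unset Strict Implicit.
Unset Printing Implicit Defensive.

Local Open Scope classical_set_scope.
Local Open Scope ring_scope.
Local Open Scope complex_scope.

Definition cplx (R : realType) : numClosedFieldType := R[i].

Section Defs.
Variable R : realType.
Local Notation C := (cplx R).

Definition mxstar m n (M : 'M[C]_(m, n)) : 'M[C]_(n, m) := (map_mx Num.conj M)^T.

Definition mx_of (f : 'cV[C]_2 -> 'cV[C]_2) : 'M[C]_2 :=
  \matrix_(i < 2, j < 2) f (delta_mx j 0) i 0.

Definition is_linear (U V : lmodType C) (f : U -> V) : Prop :=
  forall (a : C) (u v : U), f (a *: u + v) = a *: f u + f v.

(* bounded (= continuous linear) operator *)
Definition bounded_op (U V : normedModType C) (f : U -> V) : Prop :=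
  is_linear f /\ continuous f.

(* Hilbert space inner product inducing the norm, plus a continuous
   Hermitian sesquilinear (Krein) form *)
Definition krein_space (K : completeNormedModType C) (ip kf : K -> K -> C) : Prop :=
  (forall (a : C) u v w, ip (a *: u + v) w = a * ip u w + ip v w) /\
  (forall u w, ip u w = Num.conj (ip w u)) /\
  (forall u, `|u| ^+ 2 = ip u u) /\
  (forall (a : C) u v w, kf (a *: u + v) w = a * kf u w + kf v w) /\
  (forall u w, kf u w = Num.conj (kf w u)) /\
  continuous (fun p : K * K => kf p.1 p.2).

Section Ops.
Variable K : normedModType C.

Definition sc_group (T : R -> K -> K) : Prop :=
  (forall t, bounded_op (T t)) /\
  (forall u, T 0 u = u) /\
  (forall s t u, T (s + t) u = T s (T t u)) /\
  (forall u, continuous (fun t : R => T t u)).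

Definition generator_of (T : R -> K -> K) (D : set K) (A : K -> K) : Prop :=
  sc_group T /\
  (forall u, D u <-> exists v : K,
       (fun h : R => (h%:C)^-1 *: (T h u - u)) @ (0 : R)^' --> v) /\
  (forall u, D u -> (fun h : R => (h%:C)^-1 *: (T h u - u)) @ (0 : R)^' --> A u).

Definition is_generator (D : set K) (A : K -> K) : Prop :=
  exists T, generator_of T D A.

(* Rl = (lam I - A)^{-1}, the resolvent: lam is not in the spectrum of A *)
Definition resolvent (D : set K) (A : K -> K) (lam : C) (Rl : K -> K) : Prop :=
  bounded_op Rl /\
  (forall v, D (Rl v) /\ lam *: Rl v - A (Rl v) = v) /\
  (forall w, D w -> Rl (lam *: w - A w) = w).

Definition vderiv (V : normedModType C) (f : R -> V) (x : R) (v : V) : Prop :=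
  (fun h : R => (h%:C)^-1 *: (f (x + h) - f x)) @ (0 : R)^' --> v.

Definition op_deriv (U V : normedModType C) (F : R -> U -> V) (x : R) (F' : U -> V) : Prop :=
  bounded_op F' /\
  forall eps : R, 0 < eps -> \forall h \near (0 : R)^', forall u : U,
      `|(h%:C)^-1 *: (F (x + h) u - F x u) - F' u| <= eps%:C * `|u|.

Definition node (D : set K) (A Az : K -> K) (Cop : K -> 'cV[C]_2) (X : K -> K)
    (B : 'cV[C]_2 -> K) (s1 : 'M[C]_2) : Prop :=
  bounded_op Cop /\ bounded_op X /\ bounded_op B /\
  is_generator D A /\ is_generator D Az /\ closure D = setT /\
  (forall u, D u -> D (X u)) /\
  (forall u, D u -> A (X u) + X (Az u) + B (s1 *m Cop u) = 0).

Definition node_invertible (D : set K) (X : K -> K) : Prop :=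
  exists Xi : K -> K, bounded_op Xi /\ (forall v, X (Xi v) = v) /\
    (forall v, Xi (X v) = v) /\ (forall u, D u -> D (Xi u)).

Definition prevessel (D : set K) (A Az : K -> K) (Cop : R -> K -> 'cV[C]_2)
    (X : R -> K -> K) (B : R -> 'cV[C]_2 -> K) (s1 s2 gam : 'M[C]_2) : Prop :=
  forall x : R,
    node D A Az (Cop x) (X x) (B x) s1 /\
    (forall e, D (B x (s2 *m e))) /\
    (exists B', op_deriv B x B' /\
       forall e, B' e = - (A (B x (s2 *m (invmx s1 *m e))) + B x (gam *m (invmx s1 *m e)))) /\
    (exists C', op_deriv Cop x C' /\
       forall u, D u -> C' u = invmx s1 *m (- (s2 *m Cop x (Az u)) + gam *m Cop x u)) /\
    (exists X', op_deriv X x X' /\ forall u, X' u = B x (s2 *m Cop x u)).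

Definition vessel (Omega : set R) (D : set K) (A Az : K -> K) (Cop : R -> K -> 'cV[C]_2)
    (X : R -> K -> K) (B : R -> 'cV[C]_2 -> K) (s1 s2 gam : 'M[C]_2) : Prop :=
  prevessel D A Az Cop X B s1 s2 gam /\
  forall x, Omega x -> node_invertible D (X x).

(* gamma_*(x) = gam + s2 C X^{-1} B s1 - s1 C X^{-1} B s2, with Xi x = X(x)^{-1} *)
Definition gamma_star (Cop : R -> K -> 'cV[C]_2) (Xi : R -> K -> K)
    (B : R -> 'cV[C]_2 -> K) (s1 s2 gam : 'M[C]_2) (x : R) : 'M[C]_2 :=
  gam + mx_of (fun e => s2 *m Cop x (Xi x (B x (s1 *m e))))
      - mx_of (fun e => s1 *m Cop x (Xi x (B x (s2 *m e)))).

(* transfer function S(lam, x) = I - C(x) X(x)^{-1} (lam I - A)^{-1} B(x) s1,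
   with Rl = (lam I - A)^{-1} *)
Definition transfer (Cop : R -> K -> 'cV[C]_2) (Xi : R -> K -> K) (Rl : K -> K)
    (B : R -> 'cV[C]_2 -> K) (s1 : 'M[C]_2) (x : R) (e : 'cV[C]_2) : 'cV[C]_2 :=
  e - Cop x (Xi x (Rl (B x (s1 *m e)))).

End Ops.

Definition sigma_data (s1 s2 gam : 'M[C]_2) : Prop :=
  s1 \in unitmx /\ s1 = mxstar s1 /\ s2 = mxstar s2 /\ gam = - mxstar gam.

End Defs.

(* Write y = u - C X^{-1} (lam - A)^{-1} B s1 u.  Differentiating the factors with the vessel
   equations for B, C and X, the derivative of B s1 u is (lam - A) B s2 u by the equation for u,
   so (lam - A)^{-1} cancels and the X-derivative term turns the inner vector into B s2 y.
   Eliminating A_zeta through the node identity A X + X A_zeta + B s1 C = 0 applied to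
   w0 = X^{-1} (lam - A)^{-1} B s1 u gives A_zeta w0 = X^{-1} B s1 y - lam w0, and the remaining
   terms assemble into s1 y' = lam s2 y + gamma_* y, the linkage condition. *)

From HB Require Import structures.
From mathcomp Require Import all_boot all_order all_algebra.
From mathcomp Require Import all_classical all_reals all_analysis.
From mathcomp Require Import complex ring lra.
Import Order.TTheory GRing.Theory Num.Theory.
Import numFieldTopology.Exports numFieldNormedType.Exports.
Local Open Scope classical_set_scope.
Local Open Scope ring_scope.

Set Implicit Arguments.
Unset Strict Implicit.
Unset Printing Implicit Defensive.
Local Open Scope complex_scope.

Section RealNorm.
Variable R : realType.
Local Notation C := (cplx R).

(* Norms of a normed module over [C] are complex numbers with zero imaginary part; estimates
   are carried out on their real part, in the ordered field [R]. *)
Definition rnorm (V : normedModType C) (v : V) : R := complex.Re `|v|.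

Lemma complex_ge0E (z : C) : 0 <= z -> z = (complex.Re z)%:C.
Proof.
move=> z_ge0; rewrite [LHS]complexE.
by move: z_ge0; rewrite lecE => /andP[/eqP -> _]; rewrite mulr0 addr0.
Qed.

Variable V : normedModType C.
Implicit Types v w : V.

Lemma norm_rnorm v : `|v| = (rnorm v)%:C.
Proof. exact/complex_ge0E/normr_ge0. Qed.

Lemma rnorm_ge0 v : 0 <= rnorm v.
Proof. by rewrite -lecR -norm_rnorm normr_ge0. Qed.

Lemma ler_rnormD v w : rnorm (v + w) <= rnorm v + rnorm w.
Proof. by rewrite -lecR rmorphD /= -!norm_rnorm ler_normD. Qed.

Lemma rnormN v : rnorm (- v) = rnorm v.
Proof. by rewrite /rnorm normrN. Qed.

Lemma rnormB_sym v w : rnorm (v - w) = rnorm (w - v).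
Proof. by rewrite -rnormN opprB. Qed.

Lemma ler_rnormB v w : rnorm (v - w) <= rnorm v + rnorm w.
Proof. by rewrite -(rnormN w) ler_rnormD. Qed.

Lemma rnorm0 : rnorm (0 : V) = 0.
Proof. by rewrite /rnorm normr0. Qed.

Lemma rnorm0_eq0 v : rnorm v = 0 -> v = 0.
Proof. by move=> v0; apply/normr0_eq0; rewrite norm_rnorm v0. Qed.

Lemma rnormZR (h : R) v : rnorm (h%:C *: v) = `|h| * rnorm v.
Proof.
have normhE : `|h%:C| = `|h|%:C :> C.
  by rewrite normc_def /= expr0n /= addr0 sqrtr_sqr.
by rewrite /rnorm normrZ normhE (norm_rnorm v) -rmorphM.
Qed.

Lemma ler_rnorm_dist v w : rnorm w <= rnorm v + rnorm (v - w).
Proof. by rewrite -{1}(subKr v w) ler_rnormB. Qed.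

Lemma cvg_rnormP {T} {F : set_system T} {FF : Filter F} (f : T -> V) (y : V) :
  f @ F --> y <-> forall e : R, 0 < e -> \forall t \near F, rnorm (y - f t) <= e.
Proof.
rewrite cvgrPdist_le; split => [f_y e e_gt0|f_y eps eps_gt0].
  by apply: filterS (f_y e%:C _) => [t|]; rewrite ?ltcR // norm_rnorm lecR.
have epsE := complex_ge0E (ltW eps_gt0).
have Reeps_gt0 : 0 < complex.Re eps by rewrite -ltcR -epsE.
by apply: filterS (f_y _ Reeps_gt0) => t; rewrite epsE norm_rnorm lecR.
Qed.

End RealNorm.

Section LinearMaps.
Variable R : realType.
Local Notation C := (cplx R).
Variables U V : normedModType C.
Variable f : U -> V.
Hypothesis f_lin : is_linear f.

Lemma is_linear0 : f 0 = 0.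
Proof.
by have /eqP := f_lin 1 0 0; rewrite !scale1r addr0 -subr_eq subrr eq_sym => /eqP.
Qed.

Lemma is_linearZ a v : f (a *: v) = a *: f v.
Proof. by have := f_lin a v 0; rewrite !addr0 is_linear0 addr0. Qed.

Lemma is_linearD v w : f (v + w) = f v + f w.
Proof. by have := f_lin 1 v w; rewrite !scale1r. Qed.

Lemma is_linearN v : f (- v) = - f v.
Proof. by rewrite -scaleN1r is_linearZ scaleN1r. Qed.

Lemma is_linearB v w : f (v - w) = f v - f w.
Proof. by rewrite is_linearD is_linearN. Qed.

End LinearMaps.

Lemma is_linear_comp (R : realType) (U V W : normedModType (cplx R))
    (f : V -> W) (g : U -> V) :
  is_linear f -> is_linear g -> is_linear (f \o g).
Proof. by move=> f_lin g_lin a u v /=; rewrite g_lin f_lin. Qed.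

Lemma bounded_op_le (R : realType) (U V : normedModType (cplx R)) (f : U -> V) :
  bounded_op f -> exists2 M : R, 0 < M & forall w, rnorm (f w) <= M * rnorm w.
Proof.
move=> [f_lin f_cont].
have /cvg_rnormP/(_ 1 ltr01) := f_cont 0; rewrite is_linear0 //.
move=> /nbhs_norm0P[d /= d_gt0 f_small].
have dE := complex_ge0E (ltW d_gt0).
have del_gt0 : 0 < complex.Re d by rewrite -ltcR -dE.
set del := complex.Re d in del_gt0 dE.
exists (2 / del) => [|w]; first by rewrite divr_gt0.
have [w0|w_neq0] := eqVneq (rnorm w) 0.
  by rewrite (rnorm0_eq0 w0) is_linear0 // !rnorm0 mulr0.
have w_gt0 : 0 < rnorm w by rewrite lt_neqAle eq_sym w_neq0 rnorm_ge0.
(* rescale w to norm [del / 2], inside the ball where [f] is bounded by 1 *)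
pose c := del / (2 * rnorm w).
have c_gt0 : 0 < c by rewrite divr_gt0 // mulr_gt0.
have : rnorm (f (c%:C *: w)) <= 1.
  have := f_small (c%:C *: w); rewrite /= sub0r rnormN; apply.
  rewrite dE norm_rnorm ltcR rnormZR (gtr0_norm c_gt0).
  have -> : c * rnorm w = del / 2 by rewrite /c; field; rewrite lt0r_neq0.
  by rewrite ltr_pdivrMr // ltr_pMr // ltr1n.
rewrite is_linearZ // rnormZR (gtr0_norm c_gt0) -ler_pdivlMl // mulr1.
by have -> : 2 / del * rnorm w = c^-1 by rewrite /c; field; rewrite !lt0r_neq0.
Qed.

Section Derivatives.
Variable R : realType.
Local Notation C := (cplx R).

Definition diffq (V : normedModType C) (f : R -> V) (x h : R) : V :=
  (h%:C)^-1 *: (f (x + h) - f x).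

Definition op_diffq (U V : normedModType C) (F : R -> U -> V) (x h : R) (u : U) : V :=
  (h%:C)^-1 *: (F (x + h) u - F x u).

Lemma complex_real_neq0 (h : R) : h != 0 -> h%:C != 0.
Proof. by apply: contra => /eqP h0; apply/eqP/complexI; rewrite h0. Qed.

Lemma scaleRK (V : normedModType C) (h : R) (v : V) :
  h != 0 -> h%:C *: ((h%:C)^-1 *: v) = v.
Proof. by move=> h_neq0; rewrite scalerA divff ?scale1r ?complex_real_neq0. Qed.

Lemma increment_diffq (V : normedModType C) (f : R -> V) x h :
  h != 0 -> f (x + h) - f x = h%:C *: diffq f x h.
Proof. by move=> h_neq0; rewrite scaleRK. Qed.

Lemma cvg_scaleR0 (V : normedModType C) (g : R -> V) (M : R) :
  (\forall h \near 0^', rnorm (g h) <= M) -> h%:C *: g h @[h --> 0^'] --> 0.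
Proof.
move=> g_bounded; apply/cvg_rnormP => e e_gt0.
have M1_gt0 : 0 < `|M| + 1 by rewrite ltr_wpDl.
have e_M1 : e / (`|M| + 1) * (`|M| + 1) = e by rewrite divfK // lt0r_neq0.
have a_ge0 : 0 <= e / (`|M| + 1) by rewrite divr_ge0 // ltW.
near=> h.
have h_small : `|h| <= e / (`|M| + 1) by near: h; apply: dnbhs0_le; rewrite divr_gt0.
have gh_le : rnorm (g h) <= `|M| + 1.
  by apply: le_trans (ler_wpDr ler01 (ler_norm M)); near: h.
rewrite sub0r rnormN rnormZR.
by have := rnorm_ge0 (g h); have := normr_ge0 h; nra.
Unshelve. all: by end_near.
Qed.

Lemma vderiv_bounded (V : normedModType C) (f : R -> V) x v :
  vderiv f x v -> \forall h \near 0^', rnorm (diffq f x h) <= rnorm v + 1.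
Proof.
move=> /cvg_rnormP/(_ 1 ltr01); apply: filterS => h dq_near.
by apply: le_trans (ler_rnorm_dist v _) _; rewrite lerD2l.
Qed.

Lemma vderiv_cvg_increment (V : normedModType C) (f : R -> V) x v :
  vderiv f x v -> f (x + h) @[h --> 0^'] --> f x.
Proof.
move=> df; apply/subr_cvg0.
have : \forall h \near 0^', h%:C *: diffq f x h = f (x + h) - f x.
  by near=> h; rewrite -increment_diffq //; near: h; exact: nbhs_dnbhs_neq.
move/near_eq_cvg/cvg_trans; apply; exact: cvg_scaleR0 (vderiv_bounded df).
Unshelve. all: by end_near.
Qed.

Section VectorDerivatives.
Variables U V : normedModType C.

Lemma vderiv_comp_op (f : U -> V) (g : R -> U) x v :
  bounded_op f -> vderiv g x v -> vderiv (f \o g) x (f v).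
Proof.
move=> [f_lin f_cont] dg; change (diffq (f \o g) x h @[h --> (0 : R)^'] --> f v).
have -> : diffq (f \o g) x = f \o diffq g x.
  by apply/funext => h /=; rewrite /diffq (is_linearZ f_lin) (is_linearB f_lin).
exact: continuous_cvg (f_cont v) dg.
Qed.

Lemma vderivB (f g : R -> V) x a b :
  vderiv f x a -> vderiv g x b -> vderiv (fun t => f t - g t) x (a - b).
Proof.
move=> df dg.
change (diffq (fun t => f t - g t) x h @[h --> (0 : R)^'] --> a - b).
have -> : diffq (fun t => f t - g t) x = diffq f x - diffq g x.
  apply/funext => h; rewrite [RHS]/GRing.add /= /diffq -scalerBr.
  by rewrite !opprD !opprK addrACA.
exact: cvgB df dg.
Qed.

Lemma op_derivP (F : R -> U -> V) x F' : op_deriv F x F' ->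
  forall e : R, 0 < e -> \forall h \near 0^', forall u,
    rnorm (op_diffq F x h u - F' u) <= e * rnorm u.
Proof.
move=> [_ dF] e e_gt0; apply: filterS (dF e e_gt0) => h dF_h u.
by rewrite -lecR rmorphM /= -!norm_rnorm dF_h.
Qed.

Lemma op_deriv_le (F : R -> U -> V) x F' : op_deriv F x F' ->
  exists2 M : R, 0 < M &
    \forall h \near 0^', forall u, rnorm (op_diffq F x h u) <= M * rnorm u.
Proof.
move=> dF; have [M M_gt0 F'_le] := bounded_op_le dF.1.
exists (M + 1); first by rewrite addr_gt0.
apply: filterS (op_derivP dF ltr01) => h dF_h u.
apply: le_trans (ler_rnorm_dist (F' u) _) _; rewrite mulrDl mul1r.
by apply: lerD; rewrite // rnormB_sym -[leRHS]mul1r.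
Qed.

Lemma op_deriv_cvg (F : R -> U -> V) x F' (g : R -> U) g0 :
  op_deriv F x F' -> g h @[h --> 0^'] --> g0 ->
  op_diffq F x h (g h) @[h --> 0^'] --> F' g0.
Proof.
move=> dF g_g0; apply: (cvg_sub0 (g := F' \o g)).
  apply/cvg_rnormP => e e_gt0; set K := rnorm g0 + 1.
  have K_gt0 : 0 < K by rewrite ltr_wpDl ?rnorm_ge0.
  have /cvg_rnormP/(_ 1 ltr01) g_near := g_g0.
  near=> h; rewrite sub0r rnormN.
  have gh_le : rnorm (g h) <= K.
    by apply: le_trans (ler_rnorm_dist g0 _) _; rewrite lerD2l; near: h.
  have dF_h : rnorm (op_diffq F x h (g h) - F' (g h)) <= e / K * rnorm (g h).
    by near: h; apply: filterS (op_derivP dF (divr_gt0 e_gt0 K_gt0)) => h /(_ (g h)).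
  apply: le_trans dF_h _.
  by rewrite -[leRHS](divfK (lt0r_neq0 K_gt0)) ler_wpM2l // divr_ge0 // ltW.
exact: continuous_cvg (dF.1.2 g0) g_g0.
Unshelve. all: by end_near.
Qed.

Lemma vderiv_op_apply (F : R -> U -> V) F' (f : R -> U) x v :
  op_deriv F x F' -> bounded_op (F x) -> vderiv f x v ->
  vderiv (fun t => F t (f t)) x (F x v + F' (f x)).
Proof.
move=> dF [Fx_lin Fx_cont] df.
change (diffq (fun t => F t (f t)) x h @[h --> (0 : R)^'] --> F x v + F' (f x)).
have -> : diffq (fun t => F t (f t)) x =
    (fun h => F x (diffq f x h) + op_diffq F x h (f (x + h))).
  apply/funext => h; rewrite /diffq /op_diffq (is_linearZ Fx_lin) (is_linearB Fx_lin).
  by rewrite -scalerDr; congr (_ *: _); rewrite [RHS]addrC [RHS]addrA subrK.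
apply: cvgD; first exact: continuous_cvg (Fx_cont v) df.
exact: (op_deriv_cvg (g := fun h => f (x + h)) dF (vderiv_cvg_increment df)).
Qed.

End VectorDerivatives.
End Derivatives.

Section InverseFamily.
Variable R : realType.
Local Notation C := (cplx R).
Variable V : normedModType C.
Variables (Xo Xi : R -> V -> V) (X' : V -> V) (v : R -> V) (x : R) (v' : V).
Hypotheses (dXo : op_deriv Xo x X') (Xix_bounded : bounded_op (Xi x)).
Hypothesis XoK_near : \forall h \near 0^', forall w, Xo (x + h) (Xi (x + h) w) = w.
Hypothesis XiK : forall w, Xi x (Xo x w) = w.
Hypothesis dv : vderiv v x v'.

Let w h := Xi (x + h) (v (x + h)).
Let z h := diffq v x h - op_diffq Xo x h (w h).

Lemma increment_inverse_apply :
  \forall h \near 0^', h%:C *: Xi x (z h) = w h - Xi x (v x).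
Proof.
have [Xi_lin _] := Xix_bounded.
near=> h.
have h_neq0 : h != 0 by near: h; exact: nbhs_dnbhs_neq.
have XohK : Xo (x + h) (w h) = v (x + h).
  by near: h; apply: filterS XoK_near => t XoK_t; exact: XoK_t.
rewrite -(is_linearZ Xi_lin) scalerBr !scaleRK // XohK.
have -> : v (x + h) - v x - (v (x + h) - Xo x (w h)) = Xo x (w h) - v x.
  by rewrite opprB addrC addrA subrK.
by rewrite (is_linearB Xi_lin) XiK.
Unshelve. all: by end_near.
Qed.

Lemma inverse_apply_bounded : exists W : R, \forall h \near 0^', rnorm (w h) <= W.
Proof.
have [MX MX_gt0 dXo_le] := op_deriv_le dXo.
have [MT MT_gt0 Xi_le] := bounded_op_le Xix_bounded.
set a := rnorm v' + 1; set r0 := rnorm (Xi x (v x)).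
exists (2 * (r0 + MT * a)).
have a_ge0 : 0 <= a by rewrite ler_wpDr ?rnorm_ge0.
have del_gt0 : 0 < 1 / (2 * MT * MX) by rewrite divr_gt0 // !mulr_gt0.
near=> h.
have h_le1 : `|h| <= 1 by near: h; exact: dnbhs0_le.
have h_del : `|h| * (2 * MT * MX) <= 1.
  by rewrite -ler_pdivlMr ?mulr_gt0 //; near: h; exact: dnbhs0_le.
have dv_le : rnorm (diffq v x h) <= a by near: h; exact: vderiv_bounded.
have dXo_h : forall u, rnorm (op_diffq Xo x h u) <= MX * rnorm u by near: h.
have incr_h : h%:C *: Xi x (z h) = w h - Xi x (v x).
  by near: h; exact: increment_inverse_apply.
have incr_le : rnorm (w h - Xi x (v x)) <= `|h| * (MT * (a + MX * rnorm (w h))).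
  rewrite -incr_h rnormZR; apply: ler_wpM2l => //.
  apply: le_trans (Xi_le _) _; apply: ler_wpM2l; first exact: ltW.
  by rewrite /z; apply: le_trans (ler_rnormB _ _) _; exact: lerD dv_le (dXo_h _).
have := ler_rnorm_dist (Xi x (v x)) (w h); rewrite rnormB_sym -/r0.
have small_a : `|h| * (MT * a) <= MT * a by rewrite ler_piMl // mulr_ge0 // ltW.
have small_w : `|h| * (MT * (MX * rnorm (w h))) <= rnorm (w h) / 2.
  have -> : `|h| * (MT * (MX * rnorm (w h))) = `|h| * (2 * MT * MX) * rnorm (w h) / 2.
    by field.
  by rewrite ler_pM2r // ler_piMl ?rnorm_ge0.
move: incr_le; rewrite mulrDr mulrDr; lra.
Unshelve. all: by end_near.
Qed.

Lemma inverse_apply_cvg : w h @[h --> 0^'] --> Xi x (v x).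
Proof.
have [W w_le] := inverse_apply_bounded.
have [MX MX_gt0 dXo_le] := op_deriv_le dXo.
have [MT MT_gt0 Xi_le] := bounded_op_le Xix_bounded.
apply/subr_cvg0; apply: cvg_trans (near_eq_cvg increment_inverse_apply) _.
apply: (@cvg_scaleR0 _ _ _ (MT * (rnorm v' + 1 + MX * W))).
near=> h; apply: le_trans (Xi_le _) _; apply: ler_wpM2l; first exact: ltW.
apply: le_trans (ler_rnormB _ _) _; apply: lerD; first by near: h; exact: vderiv_bounded.
apply: le_trans (_ : MX * rnorm (w h) <= _).
  by near: h; apply: filterS dXo_le => t; exact.
by apply: ler_wpM2l; [exact: ltW | near: h].
Unshelve. all: by end_near.
Qed.

Lemma vderiv_inverse_apply :
  vderiv (fun t => Xi t (v t)) x (Xi x (v' - X' (Xi x (v x)))).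
Proof.
have [Xi_lin Xi_cont] := Xix_bounded.
change (diffq (fun t => Xi t (v t)) x h @[h --> (0 : R)^'] --> Xi x (v' - X' (Xi x (v x)))).
have : {near 0^', Xi x \o z =1 diffq (fun t => Xi t (v t)) x}.
  near=> h => /=.
  have h_neq0 : h != 0 by near: h; exact: nbhs_dnbhs_neq.
  have incr_h : h%:C *: Xi x (z h) = w h - Xi x (v x).
    by near: h; exact: increment_inverse_apply.
  by rewrite /diffq /= -incr_h scalerA mulVf ?scale1r // complex_real_neq0.
move/near_eq_cvg/cvg_trans; apply; apply: continuous_cvg; first exact: Xi_cont.
exact: cvgB dv (op_deriv_cvg dXo inverse_apply_cvg).
Unshelve. all: by end_near.
Qed.

End InverseFamily.

Section Matrices.
Variable R : realType.
Local Notation C := (cplx R).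

Lemma continuous_sum (T : topologicalType) (V : normedModType C) (I : Type)
    (r : seq I) (f : I -> T -> V) :
  (forall i, continuous (f i)) -> continuous (fun t => \sum_(i <- r) f i t).
Proof.
move=> f_cont t0; elim: r => [|i r IH].
  under eq_fun do rewrite big_nil.
  exact: cvg_cst.
under eq_fun do rewrite big_cons.
exact: cvgD (f_cont i t0) IH.
Qed.

Lemma mulmx_bounded m n (s : 'M[C]_(m, n)) : bounded_op (fun e : 'cV[C]_n => s *m e).
Proof.
split=> [a e e'|]; first by rewrite mulmxDr scalemxAr.
have -> : (fun e : 'cV[C]_n => s *m e) = (fun e => \sum_j e j 0 *: col j s).
  apply/funext => e; apply/matrixP => i k.
  rewrite (ord1 k) !mxE summxE; apply: eq_bigr => j _; by rewrite !mxE mulrC.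
by apply: continuous_sum => j e0; apply: continuousZr_tmp; exact: coord_continuous.
Qed.

Lemma mul_mx_of (f : 'cV[C]_2 -> 'cV[C]_2) e : is_linear f -> mx_of f *m e = f e.
Proof.
move=> f_lin; rewrite [in RHS](matrix_sum_delta e) !big_ord_recl !big_ord0 !addr0.
rewrite !(is_linearD f_lin) !(is_linearZ f_lin).
apply/matrixP => i j; rewrite !mxE !big_ord_recl big_ord0 addr0 (ord1 j) /mx_of !mxE.
by congr (_ + _); apply: mulrC.
Qed.

End Matrices.

Section NodeAlgebra.
Variable R : realType.
Local Notation C := (cplx R).
Variable K : normedModType C.
Variables (D : set K) (A Az : K -> K) (Cx : K -> 'cV[C]_2) (Xx Xix : K -> K).
Variables (Bx : 'cV[C]_2 -> K) (s1 s2 gam : 'M[C]_2) (lam : C) (Rl : K -> K).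
Hypotheses (Cx_lin : is_linear Cx) (Xix_lin : is_linear Xix) (Bx_lin : is_linear Bx).
Hypothesis node_eq : forall w, D w -> A (Xx w) + Xx (Az w) + Bx (s1 *m Cx w) = 0.
Hypotheses (XxK : forall w, Xx (Xix w) = w) (XixK : forall w, Xix (Xx w) = w).
Hypothesis Xix_D : forall w, D w -> D (Xix w).
Hypothesis resolvent_lam : resolvent D A lam Rl.

Lemma A_resolvent v : A (Rl v) = lam *: Rl v - v.
Proof. by rewrite -[X in _ = _ - X](resolvent_lam.2.1 v).2 subKr. Qed.

Lemma node_Az_resolvent e (w0 := Xix (Rl (Bx (s1 *m e)))) :
  Az w0 = Xix (Bx (s1 *m (e - Cx w0))) - lam *: w0.
Proof.
have XxAz : Xx (Az w0) = - (A (Xx w0) + Bx (s1 *m Cx w0)).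
  apply/eqP; rewrite -addr_eq0 addrCA addrA node_eq //.
  exact: Xix_D (resolvent_lam.2.1 _).1.
rewrite -[Az w0]XixK XxAz XxK A_resolvent /w0 -(is_linearZ Xix_lin).
rewrite -(is_linearB Xix_lin); congr (Xix _).
by rewrite mulmxBr (is_linearB Bx_lin) opprD opprB addrAC.
Qed.

Lemma resolvent_B_deriv (B' : 'cV[C]_2 -> K) u u' :
  s1 \in unitmx -> D (Bx (s2 *m u)) ->
  (forall e, B' e = - (A (Bx (s2 *m (invmx s1 *m e))) + Bx (gam *m (invmx s1 *m e)))) ->
  s1 *m u' = lam *: (s2 *m u) + gam *m u ->
  Rl (Bx (s1 *m u') + B' (s1 *m u)) = Bx (s2 *m u).
Proof.
move=> s1_unit Bs2u_D B'E s1u'E.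
rewrite B'E mulKmx // s1u'E (is_linearD Bx_lin) (is_linearZ Bx_lin).
rewrite opprD addrACA subrr addr0.
exact: (resolvent_lam.2.2 _ Bs2u_D).
Qed.

Lemma transfer_linkage (C' : K -> 'cV[C]_2) u u'
    (w0 := Xix (Rl (Bx (s1 *m u)))) (y := u - Cx w0) :
  s1 \in unitmx ->
  C' w0 = invmx s1 *m (- (s2 *m Cx (Az w0)) + gam *m Cx w0) ->
  s1 *m u' = lam *: (s2 *m u) + gam *m u ->
  lam *: (s2 *m y) - s1 *m (u' - (Cx (Xix (Bx (s2 *m y))) + C' w0))
    + (gam + mx_of (fun e => s2 *m Cx (Xix (Bx (s1 *m e))))
           - mx_of (fun e => s1 *m Cx (Xix (Bx (s2 *m e))))) *m y = 0.
Proof.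
move=> s1_unit C'E s1u'E.
have sandwich_lin (p q : 'M[C]_2) : is_linear (fun e => p *m Cx (Xix (Bx (q *m e)))).
  have p_lin := (mulmx_bounded p).1; have q_lin := (mulmx_bounded q).1.
  exact: is_linear_comp (is_linear_comp (is_linear_comp
    (is_linear_comp p_lin Cx_lin) Xix_lin) Bx_lin) q_lin.
rewrite mulmxBl mulmxDl !mul_mx_of // C'E (mulmxBr s1 u') (mulmxDr s1) mulKVmx // s1u'E.
rewrite node_Az_resolvent -/w0 -/y (is_linearB Cx_lin) (is_linearZ Cx_lin).
move: (Cx (Xix (Bx (s1 *m y)))) (Cx (Xix (Bx (s2 *m y)))) => P Q.
rewrite /y !mulmxBr -!scalemxAr.
move: (s2 *m u) (s2 *m Cx w0) (gam *m u) (gam *m Cx w0) (s2 *m P) (s1 *m Q).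
by move=> a b c d p q; apply/matrixP => i j; rewrite !mxE; ring.
Qed.

End NodeAlgebra.

Section TransferDerivative.
Variable R : realType.
Local Notation C := (cplx R).
Variable K : normedModType C.
Variables (Cop : R -> K -> 'cV[C]_2) (Xo Xi : R -> K -> K) (B : R -> 'cV[C]_2 -> K).
Variables (Rl : K -> K) (s1 : 'M[C]_2) (u : R -> 'cV[C]_2) (x : R) (u' : 'cV[C]_2).
Variables (C' : K -> 'cV[C]_2) (X' : K -> K) (B' : 'cV[C]_2 -> K).
Hypotheses (dC : op_deriv Cop x C') (dXo : op_deriv Xo x X') (dB : op_deriv B x B').
Hypotheses (Cx_bounded : bounded_op (Cop x)) (Xix_bounded : bounded_op (Xi x)).
Hypotheses (Bx_bounded : bounded_op (B x)) (Rl_bounded : bounded_op Rl).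
Hypothesis XoK_near : \forall h \near 0^', forall w, Xo (x + h) (Xi (x + h) w) = w.
Hypothesis XiK : forall w, Xi x (Xo x w) = w.
Hypothesis du : vderiv u x u'.

Lemma vderiv_transfer (w0 := Xi x (Rl (B x (s1 *m u x)))) :
  vderiv (fun t => transfer Cop Xi Rl B s1 t (u t)) x
    (u' - (Cop x (Xi x (Rl (B x (s1 *m u') + B' (s1 *m u x)) - X' w0)) + C' w0)).
Proof.
have ds1u := vderiv_comp_op (mulmx_bounded s1) du.
have dBs1u := vderiv_op_apply dB Bx_bounded ds1u.
have dRl := vderiv_comp_op Rl_bounded dBs1u.
have dXi := vderiv_inverse_apply dXo Xix_bounded XoK_near XiK dRl.
exact: vderivB du (vderiv_op_apply dC Cx_bounded dXi).
Qed.

End TransferDerivative.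

Lemma open_near_shift (R : realType) (Omega : set R) x :
  open Omega -> Omega x -> \forall h \near 0^', Omega (x + h).
Proof.
move=> Omega_open Ox; apply: nbhs_dnbhs.
by have /nbhs0P := open_nbhs_nbhs (conj Omega_open Ox).
Qed.

Lemma node_invertible_inverse (R : realType) (K : normedModType (cplx R))
    (D : set K) (X Xi : K -> K) :
  node_invertible D X -> (forall v, Xi (X v) = v) ->
  bounded_op Xi /\ forall w, D w -> D (Xi w).
Proof.
move=> [Xi0 [Xi0_bounded [XXi0 [_ Xi0_D]]]] XiK.
by have -> : Xi = Xi0 by apply/funext => v; rewrite -{1}(XXi0 v) XiK.
Qed.

Local Close Scope complex_scope.
Unset Implicit Arguments.

Theorem mainTheorem3 (R : realType) (K : completeNormedModType (cplx R))
  (ip kf : K -> K -> cplx R) (s1 s2 gam : 'M[cplx R]_2)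
  (Omega : set R) (D : set K) (A Az : K -> K)
  (Cop : R -> K -> 'cV[cplx R]_2) (X : R -> K -> K) (B : R -> 'cV[cplx R]_2 -> K)
  (Xi : R -> K -> K) (lam : cplx R) (Rl : K -> K) (u u' : R -> 'cV[cplx R]_2) :
  krein_space ip kf ->
  sigma_data s1 s2 gam ->
  open Omega ->
  vessel Omega D A Az Cop X B s1 s2 gam ->
  (forall x, Omega x -> (forall v, X x (Xi x v) = v) /\ (forall v, Xi x (X x v) = v)) ->
  resolvent D A lam Rl ->
  (forall x, Omega x ->
     vderiv u x (u' x) /\ lam *: (s2 *m u x) - s1 *m u' x + gam *m u x = 0) ->
  forall x, Omega x ->
    exists y' : 'cV[cplx R]_2,
      vderiv (fun t => transfer Cop Xi Rl B s1 t (u t)) x y' /\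
      lam *: (s2 *m transfer Cop Xi Rl B s1 x (u x)) - s1 *m y'
        + gamma_star Cop Xi B s1 s2 gam x *m transfer Cop Xi Rl B s1 x (u x) = 0.
Proof.
move=> _ [s1_unit _] Omega_open [prevessel_x invertible] XiK_Omega resolv sol x Ox.
have [[C_bd [X_bd [B_bd [_ [_ [_ [_ node_eq]]]]]]] [Bs2_D]] := prevessel_x x.
move=> [[B' [dB B'E]] [[C' [dC C'E]] [X' [dX X'E]]]].
have [XK XiK] := XiK_Omega x Ox.
have [Xi_bd Xi_D] := node_invertible_inverse (invertible x Ox) XiK.
have XK_near : \forall h \near 0^', forall w, X (x + h) (Xi (x + h) w) = w.
  by apply: filterS (open_near_shift Omega_open Ox) => h /XiK_Omega[].
have [du ode] := sol x Ox.
have s1u'E : s1 *m u' x = lam *: (s2 *m u x) + gam *m u x.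
  by apply/eqP; rewrite eq_sym -subr_eq0 addrAC ode.
set w0 := Xi x (Rl (B x (s1 *m u x))).
have w0_D : D w0 by apply: Xi_D; exact: (resolv.2.1 _).1.
exists (u' x - (Cop x (Xi x (B x (s2 *m (u x - Cop x w0)))) + C' w0)); split.
  have dT := vderiv_transfer (s1 := s1) dC dX dB C_bd Xi_bd B_bd resolv.1 XK_near XiK du.
  cbv zeta in dT; move: dT.
  by rewrite (resolvent_B_deriv B_bd.1 resolv s1_unit (Bs2_D _) B'E s1u'E) X'E -(is_linearB B_bd.1) -mulmxBr.
exact: transfer_linkage C_bd.1 Xi_bd.1 B_bd.1 node_eq XK XiK Xi_D resolv _ _ _
  s1_unit (C'E w0 w0_D) s1u'E.
Qed.
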